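(* Let $\mathcal{Q}$ be a small involutive quantaloid and $\Psi\colon\mathbb{A}\to\mathbb{B}$ a left adjoint distributor between $\mathcal{Q}$-categories, with right adjoint $\Psi^*$. Let $\Psi_{\mathsf s}\colon\mathbb{A}_{\mathsf s}\to\mathbb{B}_{\mathsf s}$ be the distributor $\Psi_{\mathsf s}=(\mathbb{B}(S_{\mathbb{B}}-,-)\otimes\Psi\otimes\mathbb{A}(-,S_{\mathbb{A}}-))\wedge(\mathbb{A}(S_{\mathbb{A}}-,-)\otimes\Psi^*\otimes\mathbb{B}(-,S_{\mathbb{B}}-))^{\mathsf o}$, i.e. $\Psi_{\mathsf s}(b,a)=\Psi(b,a)\wedge\Psi^*(a,b)^{\mathsf o}$. Then $\Psi_{\mathsf s}\otimes(\Psi_{\mathsf s})^{\mathsf o}\le\mathbb{B}_{\mathsf s}$. Consequently $\Psi_{\mathsf s}$ is a symmetric left adjoint if and only if $\mathbb{A}_{\mathsf s}\le(\Psi_{\mathsf s})^{\mathsf o}\otimes\Psi_{\mathsf s}$; and if this holds, then $\Psi=\mathbb{B}(-,S_{\mathbb{B}}-)\otimes\Psi_{\mathsf s}\otimes\mathbb{A}(S_{\mathbb{A}}-,-)$, i.e. $\Psi(b,a)=\bigvee_{a'\in\mathbb{A}_0,b'\in\mathbb{B}_0}\mathbb{B}(b,b')\circ\Psi_{\mathsf s}(b',a')\circ\mathbb{A}(a',a)$ for all $a,b$.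
   Context: A quantaloid is a category enriched in $\mathsf{Sup}$; an involution is an identity-on-objects, direction-reversing, monotone map $f\mapsto f^{\mathsf o}$ on morphisms with $(g\circ f)^{\mathsf o}=f^{\mathsf o}\circ g^{\mathsf o}$, $f^{\mathsf{oo}}=f$. A $\mathcal{Q}$-category $\mathbb{A}$: objects with types $tx$, homs $\mathbb{A}(y,x)\colon tx\to ty$ with $\mathbb{A}(z,y)\circ\mathbb{A}(y,x)\le\mathbb{A}(z,x)$, $1_{tx}\le\mathbb{A}(x,x)$; symmetric if $\mathbb{A}(x,y)=\mathbb{A}(y,x)^{\mathsf o}$. Symmetrisation $\mathbb{A}_{\mathsf s}$: same objects and types, $\mathbb{A}_{\mathsf s}(y,x)=\mathbb{A}(y,x)\wedge\mathbb{A}(x,y)^{\mathsf o}$ (symmetric); $S_{\mathbb{A}}\colon\mathbb{A}_{\mathsf s}\to\mathbb{A}$ is the identity on objects. Distributors $\Phi\colon\mathbb{A}\to\mathbb{B}$: arrows $\Phi(y,x)\colon tx\to ty$ with $\mathbb{B}(y',y)\circ\Phi(y,x)\le\Phi(y',x)$, $\Phi(y,x)\circ\mathbb{A}(x,x')\le\Phi(y,x')$; composition $(\Psi\otimes\Phi)(z,x)=\bigvee_y\Psi(z,y)\circ\Phi(y,x)$, identities the hom-families, elementwise order and infima. $\Phi$ is a left adjoint with right adjoint $\Phi^*$ if $\mathbb{A}\le\Phi^*\otimes\Phi$ and $\Phi\otimes\Phi^*\le\mathbb{B}$. $\mathbb{A}(-,S_{\mathbb{A}}-)\colon\mathbb{A}_{\mathsf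 s}\to\mathbb{A}$ and $\mathbb{A}(S_{\mathbb{A}}-,-)\colon\mathbb{A}\to\mathbb{A}_{\mathsf s}$ both have elements $\mathbb{A}(y,x)$. For a distributor $\Phi$ between symmetric $\mathcal{Q}$-categories, $\Phi^{\mathsf o}(x,y)=\Phi(y,x)^{\mathsf o}$, and $\Phi$ is a symmetric left adjoint if it is left adjoint to $\Phi^{\mathsf o}$. *)

Set Implicit Arguments.
Unset Strict Implicit.

Record InvQuantaloid := {
  qob : Type;
  qhom : qob -> qob -> Type;                 (* qhom X Y = arrows X -> Y *)
  qle : forall X Y, qhom X Y -> qhom X Y -> Prop;
  qsup : forall X Y, (qhom X Y -> Prop) -> qhom X Y;
  qcomp : forall X Y Z, qhom Y Z -> qhom X Y -> qhom X Z;
  qid : forall X, qhom X X;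
  qinv : forall X Y, qhom X Y -> qhom Y X;
  qle_refl : forall X Y (f : qhom X Y), qle f f;
  qle_trans : forall X Y (f g h : qhom X Y), qle f g -> qle g h -> qle f h;
  qle_antisym : forall X Y (f g : qhom X Y), qle f g -> qle g f -> f = g;
  qsup_ub : forall X Y (S : qhom X Y -> Prop) f, S f -> qle f (qsup S);
  qsup_least : forall X Y (S : qhom X Y -> Prop) g,
      (forall f, S f -> qle f g) -> qle (qsup S) g;
  qcomp_assoc : forall X Y Z W (h : qhom Z W) (g : qhom Y Z) (f : qhom X Y),
      qcomp h (qcomp g f) = qcomp (qcomp h g) f;
  qcomp_id_l : forall X Y (f : qhom X Y), qcomp (qid Y) f = f;
  qcomp_id_r : forall X Y (f : qhom X Y), qcomp f (qid X) = f;
  qcomp_sup_l : forall X Y Z (g : qhom Y Z) (S : qhom X Y -> Prop),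
      qcomp g (qsup S) = qsup (fun h => exists f, S f /\ h = qcomp g f);
  qcomp_sup_r : forall X Y Z (S : qhom Y Z -> Prop) (f : qhom X Y),
      qcomp (qsup S) f = qsup (fun h => exists g, S g /\ h = qcomp g f);
  qinv_mono : forall X Y (f g : qhom X Y), qle f g -> qle (qinv f) (qinv g);
  qinv_comp : forall X Y Z (g : qhom Y Z) (f : qhom X Y),
      qinv (qcomp g f) = qcomp (qinv f) (qinv g);
  qinv_inv : forall X Y (f : qhom X Y), qinv (qinv f) = f
}.

Arguments qhom : clear implicits.
Arguments qle {_ X Y} f g.
Arguments qsup {_ X Y} S.
Arguments qcomp {_ X Y Z} g f.
Arguments qid {_} X.
Arguments qinv {_ X Y} f.

Definition qmeet (Q : InvQuantaloid) X Y (f g : qhom Q X Y) : qhom Q X Y :=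
  qsup (fun h => qle h f /\ qle h g).
Arguments qmeet {Q X Y} f g.

Record QCat (Q : InvQuantaloid) := {
  cobj : Type;
  ctype : cobj -> qob Q;
  chom : forall (y x : cobj), qhom Q (ctype x) (ctype y);
  chom_comp : forall z y x, qle (qcomp (chom z y) (chom y x)) (chom z x);
  chom_id : forall x, qle (qid (ctype x)) (chom x x)
}.
Arguments ctype {Q} _ _.
Arguments chom {Q} _ y x.

(* Matrices of arrows: families Phi(y,x) : tx -> ty, indexed by objects of
   (the object sets of) a domain and codomain.  Distributors are matrices
   satisfying is_dist. *)
Definition mat (Q : InvQuantaloid) (X Y : Type) (tX : X -> qob Q) (tY : Y -> qob Q) :=
  forall (y : Y) (x : X), qhom Q (tX x) (tY y).

Section Mat.
Context {Q : InvQuantaloid}.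

Definition mcomp {X Y Z : Type} {tX : X -> qob Q} {tY : Y -> qob Q} {tZ : Z -> qob Q}
  (Psi : mat tY tZ) (Phi : mat tX tY) : mat tX tZ :=
  fun z x => qsup (fun h => exists y, h = qcomp (Psi z y) (Phi y x)).

Definition mle {X Y : Type} {tX : X -> qob Q} {tY : Y -> qob Q}
  (Phi Phi' : mat tX tY) : Prop := forall y x, qle (Phi y x) (Phi' y x).

Definition mmeet {X Y : Type} {tX : X -> qob Q} {tY : Y -> qob Q}
  (Phi Phi' : mat tX tY) : mat tX tY := fun y x => qmeet (Phi y x) (Phi' y x).

Definition mop {X Y : Type} {tX : X -> qob Q} {tY : Y -> qob Q}
  (Phi : mat tX tY) : mat tY tX := fun x y => qinv (Phi y x).

Definition is_dist {X Y : Type} {tX : X -> qob Q} {tY : Y -> qob Q}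
  (hX : mat tX tX) (hY : mat tY tY) (Phi : mat tX tY) : Prop :=
  (forall y' y x, qle (qcomp (hY y' y) (Phi y x)) (Phi y' x)) /\
  (forall y x x', qle (qcomp (Phi y x) (hX x x')) (Phi y x')).

Definition left_adjoint {X Y : Type} {tX : X -> qob Q} {tY : Y -> qob Q}
  (hX : mat tX tX) (hY : mat tY tY) (Phi : mat tX tY) (Phis : mat tY tX) : Prop :=
  is_dist hX hY Phi /\ is_dist hY hX Phis /\
  mle hX (mcomp Phis Phi) /\ mle (mcomp Phi Phis) hY.

Definition sym_left_adjoint {X Y : Type} {tX : X -> qob Q} {tY : Y -> qob Q}
  (hX : mat tX tX) (hY : mat tY tY) (Phi : mat tX tY) : Prop :=
  left_adjoint hX hY Phi (mop Phi).

End Mat.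

Definition hom {Q} (A : QCat Q) : mat (ctype A) (ctype A) := chom A.
Arguments hom {Q} A y x.

(* The hom family of the symmetrisation A_s: A_s(y,x) = A(y,x) /\ A(x,y)^o
   (same objects and types as A). *)
Definition symhom {Q} (A : QCat Q) : mat (ctype A) (ctype A) :=
  fun y x => qmeet (chom A y x) (qinv (chom A x y)).
Arguments symhom {Q} A y x.

(* The distributors A(-,S_A -) : A_s -> A and A(S_A -,-) : A -> A_s both have
   elements A(y,x), i.e. they are the matrix [hom A]. *)

Definition psi_s {Q} (A B : QCat Q) (Psi : mat (ctype A) (ctype B))
  (Psis : mat (ctype B) (ctype A)) : mat (ctype A) (ctype B) :=
  mmeet (mcomp (mcomp (hom B) Psi) (hom A))
        (mop (mcomp (mcomp (hom A) Psis) (hom B))).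
Arguments psi_s {Q} A B Psi Psis y x.

(** [Psi_s(b,a) = Psi(b,a) /\ Psi*(a,b)^o] lies below [Psi] and below [(Psi* )^o],
    so [Psi_s (x) Psi_s^o <= Psi (x) Psi* <= B]; this composite is
    self-conjugate, hence it lies below the symmetrisation [B_s].  That [Psi_s]
    and [Psi_s^o] are distributors between the symmetrisations is inherited
    from [Psi] and [Psi*], so the unit [A_s <= Psi_s^o (x) Psi_s] is the only
    remaining adjunction condition.  Given it,
    [Psi <= Psi (x) Psi_s^o (x) Psi_s <= (Psi (x) Psi* ) (x) Psi_s <= B (x) Psi_s],
    while [Psi_s <= Psi] gives the reverse inequality. *)
From Stdlib Require Import Setoid.

Section QuantaloidFacts.
Variable Q : InvQuantaloid.

Lemma qsup_pair {X Y} (f f' : qhom Q X Y) :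
  qle f f' -> qsup (fun h => h = f \/ h = f') = f'.
Proof.
  intros Hf. apply qle_antisym.
  - apply qsup_least. intros h [-> | ->]; [exact Hf | apply qle_refl].
  - apply qsup_ub. now right.
Qed.

Lemma qcomp_monor X Y Z (g : qhom Q Y Z) (f f' : qhom Q X Y) :
  qle f f' -> qle (qcomp g f) (qcomp g f').
Proof.
  intros Hf. rewrite <- (qsup_pair _ _ Hf), qcomp_sup_l.
  apply qsup_ub. exists f. split; [now left | reflexivity].
Qed.

Lemma qcomp_monol X Y Z (g g' : qhom Q Y Z) (f : qhom Q X Y) :
  qle g g' -> qle (qcomp g f) (qcomp g' f).
Proof.
  intros Hg. rewrite <- (qsup_pair _ _ Hg), qcomp_sup_r.
  apply qsup_ub. exists g. split; [now left | reflexivity].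
Qed.

Lemma qcomp_mono X Y Z (g g' : qhom Q Y Z) (f f' : qhom Q X Y) :
  qle g g' -> qle f f' -> qle (qcomp g f) (qcomp g' f').
Proof.
  intros Hg Hf. eapply qle_trans; [apply qcomp_monol, Hg | apply qcomp_monor, Hf].
Qed.

Lemma qcomp_sup_l_least X Y Z (g : qhom Q Y Z) (S : qhom Q X Y -> Prop) h :
  (forall f, S f -> qle (qcomp g f) h) -> qle (qcomp g (qsup S)) h.
Proof.
  intros Hs. rewrite qcomp_sup_l. apply qsup_least. intros k [f [Sf ->]]. auto.
Qed.

Lemma qcomp_sup_r_least X Y Z (S : qhom Q Y Z -> Prop) (f : qhom Q X Y) h :
  (forall g, S g -> qle (qcomp g f) h) -> qle (qcomp (qsup S) f) h.
Proof.
  intros Hs. rewrite qcomp_sup_r. apply qsup_least. intros k [g [Sg ->]]. auto.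
Qed.

Lemma qcomp_id_ler X Y (f : qhom Q X Y) h : qle (qid X) h -> qle f (qcomp f h).
Proof. intros Hh. rewrite <- (qcomp_id_r f) at 1. now apply qcomp_monor. Qed.

Lemma qcomp_id_lel X Y (f : qhom Q X Y) h : qle (qid Y) h -> qle f (qcomp h f).
Proof. intros Hh. rewrite <- (qcomp_id_l f) at 1. now apply qcomp_monol. Qed.

Lemma qmeet_lel X Y (f g : qhom Q X Y) : qle (qmeet f g) f.
Proof. apply qsup_least. now intros h []. Qed.

Lemma qmeet_ler X Y (f g : qhom Q X Y) : qle (qmeet f g) g.
Proof. apply qsup_least. now intros h []. Qed.

Lemma qmeet_greatest X Y (f g h : qhom Q X Y) :
  qle h f -> qle h g -> qle h (qmeet f g).
Proof. intros. apply qsup_ub. auto. Qed.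

Lemma qinv_le_swap X Y (f : qhom Q X Y) g : qle (qinv f) g <-> qle f (qinv g).
Proof.
  split; intros H.
  - rewrite <- (qinv_inv f). now apply qinv_mono.
  - rewrite <- (qinv_inv g). now apply qinv_mono.
Qed.

Lemma qinv_id X : qinv (qid X) = qid X :> qhom Q X X.
Proof.
  rewrite <- (qcomp_id_r (qinv (qid X))).
  rewrite <- (qinv_inv (qid X)) at 2.
  now rewrite <- qinv_comp, qcomp_id_r, qinv_inv.
Qed.

End QuantaloidFacts.

Section MatrixOrder.
Context {Q : InvQuantaloid} {X Y Z : Type}
  {tX : X -> qob Q} {tY : Y -> qob Q} {tZ : Z -> qob Q}.

Lemma mle_refl (Phi : mat tX tY) : mle Phi Phi.
Proof. intros y x. apply qle_refl. Qed.

Lemma mle_trans {Phi Phi' Phi'' : mat tX tY} :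
  mle Phi Phi' -> mle Phi' Phi'' -> mle Phi Phi''.
Proof. intros H H' y x. eapply qle_trans; [apply H | apply H']. Qed.

Lemma mcomp_ub (Psi : mat tY tZ) (Phi : mat tX tY) z y x :
  qle (qcomp (Psi z y) (Phi y x)) (mcomp Psi Phi z x).
Proof. apply qsup_ub. now exists y. Qed.

Lemma mcomp_least (Psi : mat tY tZ) (Phi : mat tX tY) z x h :
  (forall y, qle (qcomp (Psi z y) (Phi y x)) h) -> qle (mcomp Psi Phi z x) h.
Proof. intros H. apply qsup_least. intros k [y ->]. apply H. Qed.

End MatrixOrder.

Section MatrixFacts.
Context {Q : InvQuantaloid} {X Y Z W : Type}
  {tX : X -> qob Q} {tY : Y -> qob Q} {tZ : Z -> qob Q} {tW : W -> qob Q}.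

Lemma mcomp_mono (Psi Psi' : mat tY tZ) (Phi Phi' : mat tX tY) :
  mle Psi Psi' -> mle Phi Phi' -> mle (mcomp Psi Phi) (mcomp Psi' Phi').
Proof.
  intros HPsi HPhi z x. apply mcomp_least. intros y.
  eapply qle_trans; [apply qcomp_mono; [apply HPsi | apply HPhi] | apply mcomp_ub].
Qed.

Lemma mcomp_assoc_le (Chi : mat tZ tW) (Psi : mat tY tZ) (Phi : mat tX tY) :
  mle (mcomp Chi (mcomp Psi Phi)) (mcomp (mcomp Chi Psi) Phi).
Proof.
  intros w x. apply mcomp_least. intros z. apply qcomp_sup_l_least.
  intros f [y ->]. rewrite qcomp_assoc.
  eapply qle_trans; [apply qcomp_monol, mcomp_ub | apply mcomp_ub].
Qed.

Lemma mcomp_unitl (hY : mat tY tY) (Phi : mat tX tY) :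
  (forall y, qle (qid (tY y)) (hY y y)) -> mle Phi (mcomp hY Phi).
Proof.
  intros IY y x. eapply qle_trans; [apply qcomp_id_lel, IY | apply mcomp_ub].
Qed.

Lemma mcomp_unitr (hX : mat tX tX) (Phi : mat tX tY) :
  (forall x, qle (qid (tX x)) (hX x x)) -> mle Phi (mcomp Phi hX).
Proof.
  intros IX y x. eapply qle_trans; [apply qcomp_id_ler, IX | apply mcomp_ub].
Qed.

Lemma mop_mcomp_le (Psi : mat tY tZ) (Phi : mat tX tY) :
  mle (mop (mcomp Psi Phi)) (mcomp (mop Phi) (mop Psi)).
Proof.
  intros x z. unfold mop at 1. apply qinv_le_swap, mcomp_least. intros y.
  apply qinv_le_swap. rewrite qinv_comp. apply (mcomp_ub (mop Phi) (mop Psi)).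
Qed.

Lemma mop_mop_le (Phi : mat tX tY) : mle (mop (mop Phi)) Phi.
Proof. intros y x. unfold mop. rewrite qinv_inv. apply qle_refl. Qed.

Lemma dist_absorbs {hX : mat tX tX} {hY : mat tY tY} {Phi : mat tX tY} :
  is_dist hX hY Phi -> (forall x, qle (qid (tX x)) (hX x x)) ->
  (forall y, qle (qid (tY y)) (hY y y)) ->
  forall y x, mcomp (mcomp hY Phi) hX y x = Phi y x.
Proof.
  intros [DY DX] IX IY y x. apply qle_antisym.
  - apply mcomp_least. intros x'. apply qcomp_sup_r_least. intros f [y' ->].
    eapply qle_trans; [apply qcomp_monol, DY | apply DX].
  - revert y x. eapply mle_trans; [apply (mcomp_unitl hY Phi IY) | apply (mcomp_unitr hX _ IX)].
Qed.

Lemma is_dist_mop {hX : mat tX tX} {hY : mat tY tY} {Phi : mat tX tY} :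
  (forall x x', qle (qinv (hX x x')) (hX x' x)) ->
  (forall y y', qle (qinv (hY y y')) (hY y' y)) ->
  is_dist hX hY Phi -> is_dist hY hX (mop Phi).
Proof.
  intros SX SY [DY DX]. unfold mop. split.
  - intros x' x y. apply qinv_le_swap. rewrite qinv_comp, qinv_inv.
    eapply qle_trans; [apply qcomp_monor, SX | apply DX].
  - intros x y y'. apply qinv_le_swap. rewrite qinv_comp, qinv_inv.
    eapply qle_trans; [apply qcomp_monol, SY | apply DY].
Qed.

End MatrixFacts.

Section Symmetrisation.
Context {Q : InvQuantaloid} (A : QCat Q).

Lemma symhom_le_hom y x : qle (symhom A y x) (chom A y x).
Proof. apply qmeet_lel. Qed.

Lemma qinv_symhom_le_hom y x : qle (qinv (symhom A y x)) (chom A x y).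
Proof. apply qinv_le_swap, qmeet_ler. Qed.

Lemma qinv_symhom_le y x : qle (qinv (symhom A y x)) (symhom A x y).
Proof.
  apply qmeet_greatest; [apply qinv_symhom_le_hom | apply qinv_mono, symhom_le_hom].
Qed.

Lemma symhom_id x : qle (qid (ctype A x)) (symhom A x x).
Proof.
  apply qmeet_greatest; [apply chom_id |].
  apply qinv_le_swap. rewrite qinv_id. apply chom_id.
Qed.

Lemma mle_symhom (M : mat (ctype A) (ctype A)) :
  mle M (hom A) -> mle (mop M) (hom A) -> mle M (symhom A).
Proof.
  intros HM HMop y x. apply qmeet_greatest; [apply HM |].
  apply qinv_le_swap, HMop.
Qed.

End Symmetrisation.

Section SymmetrisedDistributor.
Context {Q : InvQuantaloid} (A B : QCat Q)
  (Psi : mat (ctype A) (ctype B)) (Psis : mat (ctype B) (ctype A)).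
Hypothesis Psi_dist : is_dist (hom A) (hom B) Psi.
Hypothesis Psis_dist : is_dist (hom B) (hom A) Psis.
Hypothesis counit : mle (mcomp Psi Psis) (hom B).

Local Notation Ps := (psi_s A B Psi Psis).

Lemma psi_sE b a : Ps b a = qmeet (Psi b a) (qinv (Psis a b)).
Proof.
  unfold psi_s, mmeet, mop.
  rewrite (dist_absorbs Psi_dist), (dist_absorbs Psis_dist); trivial;
    intros; apply chom_id.
Qed.

Lemma psi_s_le : mle Ps Psi.
Proof. intros b a. rewrite psi_sE. apply qmeet_lel. Qed.

Lemma mop_psi_s_le : mle (mop Ps) Psis.
Proof. intros a b. unfold mop. rewrite psi_sE. apply qinv_le_swap, qmeet_ler. Qed.

Lemma psi_s_greatest b a h :
  qle h (Psi b a) -> qle (qinv h) (Psis a b) -> qle h (Ps b a).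
Proof.
  intros H1 H2. rewrite psi_sE. apply qmeet_greatest; [exact H1 |].
  now apply qinv_le_swap.
Qed.

Lemma psi_s_counit : mle (mcomp Ps (mop Ps)) (symhom B).
Proof.
  assert (Hle : mle (mcomp Ps (mop Ps)) (hom B)).
  { eapply mle_trans; [| exact counit].
    apply mcomp_mono; [apply psi_s_le | apply mop_psi_s_le]. }
  apply mle_symhom; [exact Hle |].
  eapply mle_trans; [apply mop_mcomp_le |].
  eapply mle_trans; [| exact Hle].
  apply mcomp_mono; [apply mop_mop_le | apply mle_refl].
Qed.

Lemma psi_s_dist : is_dist (symhom A) (symhom B) Ps.
Proof.
  destruct Psi_dist as [DB DA], Psis_dist as [EA EB]. split.
  - intros b' b a. apply psi_s_greatest.
    + eapply qle_trans; [| apply DB].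
      apply qcomp_mono; [apply symhom_le_hom | apply psi_s_le].
    + rewrite qinv_comp. eapply qle_trans; [| apply EB].
      apply qcomp_mono; [apply mop_psi_s_le | apply qinv_symhom_le_hom].
  - intros b a a'. apply psi_s_greatest.
    + eapply qle_trans; [| apply DA].
      apply qcomp_mono; [apply psi_s_le | apply symhom_le_hom].
    + rewrite qinv_comp. eapply qle_trans; [| apply EA].
      apply qcomp_mono; [apply qinv_symhom_le_hom | apply mop_psi_s_le].
Qed.

Lemma psi_s_sym_left_adjointP :
  sym_left_adjoint (symhom A) (symhom B) Ps <->
  mle (symhom A) (mcomp (mop Ps) Ps).
Proof.
  split; [now intros [_ [_ [unit _]]] |].
  intros unit. split; [exact psi_s_dist |].
  split; [exact (is_dist_mop (qinv_symhom_le A) (qinv_symhom_le B) psi_s_dist) |].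
  split; [exact unit | exact psi_s_counit].
Qed.

Lemma psi_s_generated_le : mle (mcomp (mcomp (hom B) Ps) (hom A)) Psi.
Proof.
  intros b a. rewrite <- (dist_absorbs Psi_dist) by (intros; apply chom_id).
  revert b a. apply mcomp_mono; [| apply mle_refl].
  apply mcomp_mono; [apply mle_refl | apply psi_s_le].
Qed.

Lemma le_psi_s_generated :
  mle (symhom A) (mcomp (mop Ps) Ps) ->
  mle Psi (mcomp (mcomp (hom B) Ps) (hom A)).
Proof.
  intros unit.
  apply (mle_trans (Phi' := mcomp Psi (symhom A))).
  { apply mcomp_unitr, symhom_id. }
  apply (mle_trans (Phi' := mcomp Psi (mcomp (mop Ps) Ps))).
  { apply mcomp_mono; [apply mle_refl | exact unit]. }
  eapply mle_trans; [apply mcomp_assoc_le |].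
  eapply mle_trans; [| apply mcomp_unitr; intros; apply chom_id].
  apply mcomp_mono; [| apply mle_refl].
  eapply mle_trans; [| exact counit].
  apply mcomp_mono; [apply mle_refl | apply mop_psi_s_le].
Qed.

Lemma psi_s_generates :
  mle (symhom A) (mcomp (mop Ps) Ps) ->
  forall b a, Psi b a = mcomp (mcomp (hom B) Ps) (hom A) b a.
Proof.
  intros unit b a.
  apply qle_antisym; [apply le_psi_s_generated, unit | apply psi_s_generated_le].
Qed.

End SymmetrisedDistributor.

Theorem lemma3p5 (Q : InvQuantaloid) (A B : QCat Q)
  (Psi : mat (ctype A) (ctype B)) (Psis : mat (ctype B) (ctype A)) :
  left_adjoint (hom A) (hom B) Psi Psis ->
  mle (mcomp (psi_s A B Psi Psis) (mop (psi_s A B Psi Psis))) (symhom B) /\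
  (sym_left_adjoint (symhom A) (symhom B) (psi_s A B Psi Psis) <->
   mle (symhom A) (mcomp (mop (psi_s A B Psi Psis)) (psi_s A B Psi Psis))) /\
  (mle (symhom A) (mcomp (mop (psi_s A B Psi Psis)) (psi_s A B Psi Psis)) ->
   forall (b : cobj B) (a : cobj A),
     Psi b a = mcomp (mcomp (hom B) (psi_s A B Psi Psis)) (hom A) b a).
Proof.
  intros [HPsi [HPsis [_ counit]]].
  split; [| split].
  - now apply psi_s_counit.
  - now apply psi_s_sym_left_adjointP.
  - now apply psi_s_generates.
Qed.
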